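(* Fix integers $0\le d\le m$, $\delta\in(0,1)$, $\chi>0$. There is $\varepsilon_0>0$ such that for all $0<\varepsilon<\varepsilon_0$: let $r>0$ with $2r^\delta<\varepsilon$, let $0<\eta\le p\le r/2$, $0<\widetilde\eta\le\widetilde p$ with $\widetilde p\le e^\varepsilon p$ and $e^{-\varepsilon}\le\widetilde\eta/\eta\le e^{\varepsilon}$, let $\widetilde q$ satisfy $\widetilde\eta\le\widetilde q\le r/2$, and let $F=D+H:B^m[r]\to\mathbb R^m$ satisfy (GT2)–(GT3). Then for every $V^u\in\mathscr M^u_{p,\eta}$ and every $V^s\in\mathscr M^s_{\widetilde q,\widetilde\eta}$, the intersection $F(V^u)\cap V^s$ consists of exactly one point.
   Context: $\|\cdot\|$ Euclidean; $B^n[r]$ balls at $0$; ${\rm Hol}_\delta(h)=\sup_{x\ne y}\|h(x)-h(y)\|/\|x-y\|^\delta$; $\|h\|_{C^0}=\sup\|h\|$. $\mathbb R^m=\mathbb R^d\times\mathbb R^{m-d}$. $\mathscr M^u_{p,\eta}$: graphs $\{(v,G(v)):v\in B^d[p]\}$; $\mathscr M^s_{q,\eta}$: graphs $\{(J(w),w):w\in B^{m-d}[q]\}$; the $C^{1+\delta}$ representing functions satisfy (AM1) value at $0$ of norm $\le10^{-3}\eta$, (AM2) derivative at $0$ of norm $\le\frac12\eta^\delta$, (AM3) $\|d\cdot\|_{C^0}+{\rm Hol}_\delta(d\cdot)\le\frac12$. (GT2): $D={\rm diag}(D_1,D_2)$ with $D_1$ on $\mathbb R^d$, $D_2$ on $\mathbb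 R^{m-d}$ invertible linear, $\|D_1^{-1}\|<e^{-\chi}$, $\|D_2\|<e^{-\chi}$. (GT3): $H:B^m[r]\to\mathbb R^m$ is $C^{1+\delta}$ with $\|H(0)\|<\varepsilon\eta$, $\|dH\|_{C^0(B^m[t])}<\varepsilon t^\delta$ for all $t\in[\eta,2p]$, ${\rm Hol}_\delta(dH)<\varepsilon$. *)

From HB Require Import structures.
From mathcomp Require Import all_boot all_order all_algebra.
From mathcomp Require Import all_classical all_reals all_analysis.
Set Implicit Arguments. Unset Strict Implicit. Unset Printing Implicit Defensive.
Import Order.TTheory GRing.Theory Num.Theory.
Local Open Scope ring_scope.
Local Open Scope classical_set_scope.

(* Points of R^n are row vectors 'rV[R]_n; linear maps act on the right: v *m A. *)

Definition enorm (R : realType) (n : nat) (v : 'rV[R]_n) : R :=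
  Num.sqrt (\sum_(i < n) (v ord0 i) ^+ 2).

Definition eball (R : realType) (n : nat) (t : R) : set 'rV[R]_n :=
  [set v | enorm v <= t].
Arguments eball {R} n t.

Definition opnorm (R : realType) (a b : nat) (A : 'M[R]_(a, b)) : R :=
  sup [set enorm (v *m A) | v in eball a 1].

Definition has_deriv_within (R : realType) (a b : nat) (S : set 'rV[R]_a)
  (f : 'rV[R]_a -> 'rV[R]_b) (df : 'rV[R]_a -> 'M[R]_(a, b)) : Prop :=
  forall x, S x -> forall e : R, 0 < e -> exists2 del : R, 0 < del &
    forall y, S y -> enorm (y - x) < del ->
      enorm (f y - f x - (y - x) *m df x) <= e * enorm (y - x).

Definition C0normM (R : realType) (a b : nat) (S : set 'rV[R]_a)
  (h : 'rV[R]_a -> 'M[R]_(a, b)) : \bar R :=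
  ereal_sup [set (opnorm (h x))%:E | x in S].

Definition HolM (R : realType) (a b : nat) (delta : R) (S : set 'rV[R]_a)
  (h : 'rV[R]_a -> 'M[R]_(a, b)) : \bar R :=
  ereal_sup [set z | exists x y, [/\ S x, S y, x != y &
     z = (opnorm (h x - h y) / (enorm (x - y)) `^ delta)%:E]].

(* G : B^d[p] -> R^k is the representing function of an element of M^u_{p,eta} *)
Definition unstable_rep (R : realType) (d k : nat) (delta p eta : R)
  (G : 'rV[R]_d -> 'rV[R]_k) : Prop :=
  exists dG : 'rV[R]_d -> 'M[R]_(d, k),
    has_deriv_within (eball d p) G dG /\
    enorm (G 0) <= 10^-3 * eta /\
    opnorm (dG 0) <= 2^-1 * eta `^ delta /\
    (C0normM (eball d p) dG + HolM delta (eball d p) dG <= (2^-1)%:E)%E.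

(* J : B^k[q] -> R^d is the representing function of an element of M^s_{q,eta} *)
Definition stable_rep (R : realType) (d k : nat) (delta q eta : R)
  (J : 'rV[R]_k -> 'rV[R]_d) : Prop :=
  exists dJ : 'rV[R]_k -> 'M[R]_(k, d),
    has_deriv_within (eball k q) J dJ /\
    enorm (J 0) <= 10^-3 * eta /\
    opnorm (dJ 0) <= 2^-1 * eta `^ delta /\
    (C0normM (eball k q) dJ + HolM delta (eball k q) dJ <= (2^-1)%:E)%E.

(* F = D + H with D = diag(D1, D2) acting on R^(d+k) = R^d x R^k *)
Definition diagF (R : realType) (d k : nat) (D1 : 'M[R]_d) (D2 : 'M[R]_k)
  (H : 'rV[R]_(d + k) -> 'rV[R]_(d + k)) (x : 'rV[R]_(d + k)) : 'rV[R]_(d + k) :=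
  x *m block_mx D1 0 0 D2 + H x.

From HB Require Import structures.
From mathcomp Require Import all_boot all_order all_algebra.
From mathcomp Require Import all_classical all_reals all_analysis.
From mathcomp Require Import ring lra.
Import Order.TTheory GRing.Theory Num.Theory.
Import numFieldNormedType.Exports.
Local Open Scope ring_scope.
Local Open Scope classical_set_scope.
Set Implicit Arguments. Unset Strict Implicit. Unset Printing Implicit Defensive.

(* Write V^u = {(v, G v)} and V^s = {(J w, w)}.  A point F(v, G v) lies on  *)
(* V^s iff v is a fixed point of the graph transform                        *)
(*   T v = (J (psi v) - H_1(v, G v)) D1^-1,  psi v = G v D2 + H_2(v, G v).  *)
(* Since |D1^-1|, |D2| <= 1, G and J are 1/2-Lipschitz and H is             *)
(* eps-Lipschitz with eps <= 1/10, T is a 1/2-contraction, and it maps       *)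
(* B^d[eta] into itself; Banach's theorem then gives existence and the      *)
(* contraction property uniqueness.                                          *)

Section EuclideanNorm.
Variable R : realType.
Implicit Types (n : nat).

Definition dotr n (u v : 'rV[R]_n) : R := \sum_(i < n) u ord0 i * v ord0 i.

Lemma enorm_sq n (v : 'rV[R]_n) : enorm v ^+ 2 = dotr v v.
Proof.
rewrite /enorm sqr_sqrtr; last by apply: sumr_ge0 => i _; rewrite sqr_ge0.
by apply: eq_bigr => i _; rewrite expr2.
Qed.

Lemma dotr_ge0 n (v : 'rV[R]_n) : 0 <= dotr v v.
Proof. by rewrite -enorm_sq sqr_ge0. Qed.

Lemma enorm_ge0 n (v : 'rV[R]_n) : 0 <= enorm v.
Proof. exact: sqrtr_ge0. Qed.

Lemma dotrC n (u v : 'rV[R]_n) : dotr u v = dotr v u.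
Proof. by apply: eq_bigr => i _; rewrite mulrC. Qed.

Lemma dotrDl n (u w v : 'rV[R]_n) : dotr (u + w) v = dotr u v + dotr w v.
Proof. by rewrite /dotr -big_split; apply: eq_bigr => i _; rewrite mxE mulrDl. Qed.

Lemma dotrZl n a (u v : 'rV[R]_n) : dotr (a *: u) v = a * dotr u v.
Proof. by rewrite /dotr mulr_sumr; apply: eq_bigr => i _; rewrite mxE mulrA. Qed.

Lemma dotrDr n (u w v : 'rV[R]_n) : dotr v (u + w) = dotr v u + dotr v w.
Proof. by rewrite dotrC dotrDl !(dotrC v). Qed.

Lemma dotrZr n a (u v : 'rV[R]_n) : dotr v (a *: u) = a * dotr v u.
Proof. by rewrite dotrC dotrZl dotrC. Qed.

Lemma dotr_eq0 n (v : 'rV[R]_n) : dotr v v = 0 -> v = 0.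
Proof.
move=> v0; apply/rowP => i; rewrite mxE.
have sq_ge0 j : xpredT j -> 0 <= v ord0 j * v ord0 j by rewrite -expr2 sqr_ge0.
move/eqP: (@psumr_eq0P _ _ xpredT _ sq_ge0 v0 i isT).
by rewrite mulf_eq0 orbb => /eqP.
Qed.

Lemma enorm_eq0 n (v : 'rV[R]_n) : enorm v = 0 -> v = 0.
Proof. by move=> v0; apply: dotr_eq0; rewrite -enorm_sq v0 expr0n. Qed.

Lemma enorm_gt0 n (v : 'rV[R]_n) : v != 0 -> 0 < enorm v.
Proof.
move=> /eqP v0; rewrite lt_neqAle enorm_ge0 andbT eq_sym.
by apply/eqP => /enorm_eq0.
Qed.

Lemma enormZ n a (v : 'rV[R]_n) : enorm (a *: v) = `|a| * enorm v.
Proof.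
rewrite /enorm -sqrtr_sqr -sqrtrM ?sqr_ge0 //; congr Num.sqrt.
by rewrite mulr_sumr; apply: eq_bigr => i _; rewrite mxE exprMn.
Qed.

Lemma enorm0 n : enorm (0 : 'rV[R]_n) = 0.
Proof. by rewrite -(scale0r (0 : 'rV[R]_n)) enormZ normr0 mul0r. Qed.

Lemma enormN n (v : 'rV[R]_n) : enorm (- v) = enorm v.
Proof. by rewrite -scaleN1r enormZ normrN normr1 mul1r. Qed.

Lemma enormB n (u v : 'rV[R]_n) : enorm (u - v) = enorm (v - u).
Proof. by rewrite -enormN opprB. Qed.

Lemma cauchy_schwarz n (u v : 'rV[R]_n) : dotr u v ^+ 2 <= dotr u u * dotr v v.
Proof.
have [->|v0] := eqVneq v 0.
  have dotr0 w : dotr w 0 = 0 by rewrite /dotr big1 // => i _; rewrite mxE mulr0.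
  by rewrite !dotr0 expr0n mulr0.
set a := dotr v v; set b := dotr u v.
have a_gt0 : 0 < a by rewrite /a -enorm_sq exprn_gt0 ?enorm_gt0.
have := dotr_ge0 (a *: u - b *: v).
rewrite -scaleNr !(dotrDl, dotrDr, dotrZl, dotrZr) -/a -/b (dotrC v u) -/b.
have -> : a * (a * dotr u u + - b * b) + (a * (- b * b) + - b * (- b * a))
    = a * (a * dotr u u - b ^+ 2) by rewrite expr2; ring.
by rewrite pmulr_rge0 // subr_ge0 mulrC.
Qed.

Lemma dotr_le n (u v : 'rV[R]_n) : dotr u v <= enorm u * enorm v.
Proof.
apply: le_trans (ler_norm _) _.
rewrite -(ler_pXn2r (isT : (0 < 2)%N)) ?nnegrE ?mulr_ge0 ?enorm_ge0 //.
by rewrite exprMn !enorm_sq real_normK ?num_real // cauchy_schwarz.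
Qed.

Lemma enormD n (u v : 'rV[R]_n) : enorm (u + v) <= enorm u + enorm v.
Proof.
rewrite -(ler_pXn2r (isT : (0 < 2)%N)) ?nnegrE ?addr_ge0 ?enorm_ge0 //.
rewrite enorm_sq !(dotrDl, dotrDr) sqrrD !enorm_sq (dotrC v u).
by have := dotr_le u v; lra.
Qed.

Lemma enorm_triangle n (u v w : 'rV[R]_n) :
  enorm (u - w) <= enorm (u - v) + enorm (v - w).
Proof. by apply: le_trans (enormD (u - v) (v - w)); rewrite addrA subrK. Qed.

Lemma enorm_coord n (v : 'rV[R]_n) i : `|v ord0 i| <= enorm v.
Proof.
rewrite -(ler_pXn2r (isT : (0 < 2)%N)) ?nnegrE ?enorm_ge0 // enorm_sq.
rewrite real_normK ?num_real // /dotr (bigD1 i) //= expr2 lerDl.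
by apply: sumr_ge0 => j _; rewrite -expr2 sqr_ge0.
Qed.

Lemma enorm_le_coord n (v : 'rV[R]_n) a : (forall i, `|v ord0 i| <= a) ->
  enorm v <= Num.sqrt n%:R * a.
Proof.
case: n v => [|n] v va.
  by rewrite /enorm big_ord0 sqrtr0 mul0r.
have a0 : 0 <= a by apply: le_trans (va ord0).
rewrite /enorm -(ger0_norm a0) -sqrtr_sqr -sqrtrM ?ler0n // ler_sqrt; last first.
  by rewrite mulr_ge0 ?ler0n ?sqr_ge0.
have -> : n.+1%:R * a ^+ 2 = \sum_(i < n.+1) a ^+ 2.
  by rewrite sumr_const card_ord mulr_natl.
apply: ler_sum => i _.
by rewrite -real_normK ?num_real // ler_pXn2r ?nnegrE ?normr_ge0.
Qed.

Lemma enorm_row_mx_sq n1 n2 (a : 'rV[R]_n1) (b : 'rV[R]_n2) :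
  enorm (row_mx a b) ^+ 2 = enorm a ^+ 2 + enorm b ^+ 2.
Proof.
rewrite !enorm_sq /dotr big_split_ord /=.
by congr (_ + _); apply: eq_bigr => i _; rewrite ?row_mxEl ?row_mxEr.
Qed.

Lemma enorm_row_mx n1 n2 (a : 'rV[R]_n1) (b : 'rV[R]_n2) :
  enorm (row_mx a b) <= enorm a + enorm b.
Proof.
rewrite -(ler_pXn2r (isT : (0 < 2)%N)) ?nnegrE ?addr_ge0 ?enorm_ge0 //.
rewrite enorm_row_mx_sq sqrrD.
by have := mulr_ge0 (enorm_ge0 a) (enorm_ge0 b); lra.
Qed.

Lemma enorm_lsubmx n1 n2 (x : 'rV[R]_(n1 + n2)) : enorm (lsubmx x) <= enorm x.
Proof.
rewrite -(ler_pXn2r (isT : (0 < 2)%N)) ?nnegrE ?enorm_ge0 //.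
by rewrite -{2}(hsubmxK x) enorm_row_mx_sq lerDl sqr_ge0.
Qed.

Lemma enorm_rsubmx n1 n2 (x : 'rV[R]_(n1 + n2)) : enorm (rsubmx x) <= enorm x.
Proof.
rewrite -(ler_pXn2r (isT : (0 < 2)%N)) ?nnegrE ?enorm_ge0 //.
by rewrite -{2}(hsubmxK x) enorm_row_mx_sq lerDr sqr_ge0.
Qed.

End EuclideanNorm.

Section MeanValue.
Variable R : realType.
Implicit Types (n m : nat) (t L : R).

Definition lipschitz_on_ball n m L t (f : 'rV[R]_n -> 'rV[R]_m) : Prop :=
  forall x y, eball n t x -> eball n t y -> enorm (f y - f x) <= L * enorm (y - x).

Lemma eball0 n t : 0 <= t -> eball n t 0.
Proof. by rewrite /eball /= enorm0. Qed.

Lemma eball_le n s t : s <= t -> eball n s `<=` eball n t.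
Proof. by move=> st x; rewrite /eball /= => /le_trans; apply. Qed.

Lemma eball_segment n t (x y : 'rV[R]_n) s : eball n t x -> eball n t y ->
  0 <= s <= 1 -> eball n t (x + s *: (y - x)).
Proof.
rewrite /eball /= => hx hy /andP[s0 s1].
have -> : x + s *: (y - x) = (1 - s) *: x + s *: y.
  by apply/rowP => i; rewrite !mxE; ring.
apply: le_trans (enormD _ _) _; rewrite !enormZ !ger0_norm ?subr_ge0 //.
have -> : t = (1 - s) * t + s * t by ring.
by apply: lerD; apply: ler_wpM2l; rewrite ?subr_ge0.
Qed.

Lemma enorm_sum n k (F : 'I_k -> 'rV[R]_n) :
  enorm (\sum_(i < k) F i) <= \sum_(i < k) enorm (F i).
Proof.
elim/big_ind2: _ => [|x1 x2 y1 y2 h1 h2|//]; first by rewrite enorm0.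
by apply: le_trans (enormD _ _) _; apply: lerD.
Qed.

Lemma opnorm_has_sup a b (A : 'M[R]_(a, b)) :
  has_sup [set enorm (v *m A) | v in eball a 1].
Proof.
split; first by exists (enorm (0 *m A)), 0 => //; apply: eball0.
exists (\sum_(i < a) enorm (row i A)) => _ [v v1 <-].
rewrite mulmx_sum_row; apply: le_trans (enorm_sum _) _.
apply: ler_sum => i _; rewrite enormZ -[X in _ <= X]mul1r.
by apply: ler_wpM2r; [exact: enorm_ge0 | exact: le_trans (enorm_coord v i) v1].
Qed.

Lemma opnorm_ub a b (A : 'M[R]_(a, b)) v : enorm v <= 1 -> enorm (v *m A) <= opnorm A.
Proof. by move=> v1; apply: sup_upper_bound (opnorm_has_sup A) _ _; exists v. Qed.

Lemma opnorm_ge0 a b (A : 'M[R]_(a, b)) : 0 <= opnorm A.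
Proof. by apply: le_trans (enorm_ge0 (0 *m A)) (opnorm_ub A _); rewrite enorm0. Qed.

Lemma opnorm_le a b (A : 'M[R]_(a, b)) v : enorm (v *m A) <= opnorm A * enorm v.
Proof.
have [->|v0] := eqVneq v 0; first by rewrite mul0mx !enorm0 mulr0.
have v_gt0 := enorm_gt0 v0.
have := opnorm_ub A (v := (enorm v)^-1 *: v).
rewrite -scalemxAl !enormZ ger0_norm ?invr_ge0 ?enorm_ge0 // mulVf ?gt_eqF //.
by move=> /(_ (lexx _)); rewrite -ler_pdivlMl ?invr_gt0 // invrK mulrC.
Qed.

Lemma opnorm_le1 a b (A : 'M[R]_(a, b)) v : opnorm A <= 1 -> enorm (v *m A) <= enorm v.
Proof.
move=> A1; apply: le_trans (opnorm_le A v) _.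
by rewrite ler_piMl ?enorm_ge0.
Qed.

Lemma has_deriv_within_sub a b (S T : set 'rV[R]_a) f (df : 'rV[R]_a -> 'M[R]_(a, b)) :
  T `<=` S -> has_deriv_within S f df -> has_deriv_within T f df.
Proof.
move=> TS fdf x Tx e e0; have [del del0 hdel] := fdf x (TS _ Tx) e e0.
by exists del => // y Ty; apply: hdel; apply: TS.
Qed.

(* Continuous induction: a path [g] on [0, 1] that is [K]-Lipschitz near   *)
(* each of its points (relative to that point) satisfies                   *)
(* |g 1 - g 0| <= K.  Proof: the supremum of {s | |g s - g 0| <= K s} is   *)
(* attained and cannot be smaller than 1.                                  *)
Lemma local_lipschitz_segment n (g : R -> 'rV[R]_n) (K : R) :
  (forall s0, 0 <= s0 <= 1 -> exists2 del, 0 < del & forall s, 0 <= s <= 1 ->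
     `|s - s0| < del -> enorm (g s - g s0) <= K * `|s - s0|) ->
  enorm (g 1 - g 0) <= K.
Proof.
move=> loc.
pose A (s : R) := 0 <= s <= 1 /\ enorm (g s - g 0) <= K * s.
have A0 : A 0 by split; rewrite ?lexx ?ler01 // subrr enorm0 mulr0.
have supA : has_sup A by split; [exists 0 | exists 1 => s [/andP[]]].
set s0 := sup A.
have s0_ge0 : 0 <= s0 by apply: sup_upper_bound.
have s0_le1 : s0 <= 1 by apply: ge_sup => [|s [/andP[]]]; [exists 0|].
have [del del0 hdel] := loc s0 (ltac:(by apply/andP)).
have step u s : 0 <= s <= 1 -> `|s - s0| < del -> enorm (g u - g 0) <= K * u ->
    enorm (g s - g 0) <= K * `|s - s0| + enorm (g s0 - g u) + K * u.
  move=> hs ss0 gu; rewrite -addrA.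
  apply: le_trans (enorm_triangle _ (g s0) _) _; apply: lerD; first exact: hdel.
  by apply: le_trans (enorm_triangle _ (g u) _) _; apply: lerD.
have As0 : A s0.
  have [u Au s0u] := sup_adherent del0 supA.
  have us0 : u <= s0 := sup_upper_bound supA Au.
  case: Au => /andP[u0 u1] gu; rewrite -/s0 in s0u.
  split; first by apply/andP.
  have := step u s0 (ltac:(by apply/andP)) (ltac:(by rewrite subrr normr0)) gu.
  rewrite subrr normr0 mulr0 add0r [enorm (g s0 - g u)]enormB.
  have := hdel u (ltac:(by apply/andP)) (ltac:(rewrite ltr_norml; apply/andP; split; lra)).
  have -> : K * s0 = K * `|u - s0| + K * u by rewrite ler0_norm ?subr_le0 //; ring.
  lra.
(* and it equals 1, otherwise [A] would contain a point beyond it *)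
have s0_1 : s0 = 1.
  apply/eqP; rewrite eq_le s0_le1 /= leNgt; apply/negP => s0_lt1.
  pose u := if s0 + del / 2 <= 1 then s0 + del / 2 else 1.
  have [u_gt_s0 u_le1 us0] : [/\ s0 < u, u <= 1 & u - s0 < del].
    rewrite /u; case: (leP (s0 + del / 2) 1) => ?; split; lra.
  have Au : A u.
    split; first by apply/andP; split; lra.
    have := step s0 u (ltac:(apply/andP; split; lra)).
    rewrite subrr enorm0 addr0 gtr0_norm ?subr_gt0 //.
    have -> : K * u = K * (u - s0) + K * s0 by ring.
    by move=> /(_ (ltac:(lra)) As0.2).
  by have := sup_upper_bound supA Au; rewrite -/s0; lra.
by have := As0.2; rewrite s0_1 mulr1.
Qed.

(* Mean value inequality on a ball, via [local_lipschitz_segment] applied   *)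
(* to the restriction of [f] to the segment from [x] to [y]; the           *)
(* derivative tolerance [e] is arbitrary.                                  *)
Lemma mean_value_ineq n m t L (f : 'rV[R]_n -> 'rV[R]_m) df :
  has_deriv_within (eball n t) f df ->
  (forall z, eball n t z -> opnorm (df z) <= L) ->
  lipschitz_on_ball L t f.
Proof.
move=> fdf dfL x y hx hy.
have [->|yx] := eqVneq y x; first by rewrite !subrr !enorm0 mulr0.
set c := enorm (y - x); have c_gt0 : 0 < c by apply: enorm_gt0; rewrite subr_eq0.
pose z s := x + s *: (y - x).
have zB s s' : z s - z s' = (s - s') *: (y - x) by apply/rowP => i; rewrite !mxE; ring.
have zball s : 0 <= s <= 1 -> eball n t (z s) by apply: eball_segment.
apply/ler_addgt0Pr => e e_gt0.
suff : enorm (f (z 1) - f (z 0)) <= L * c + e.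
  by rewrite /z scale0r addr0 scale1r [x + _]addrC subrK.
apply: (local_lipschitz_segment (g := f \o z)) => s0 hs0.
have [del del_gt0 hdel] := fdf (z s0) (zball s0 hs0) (e / c) (divr_gt0 e_gt0 c_gt0).
exists (del / c) => [|s hs ss0]; first by rewrite divr_gt0.
have zsz : enorm (z s - z s0) = `|s - s0| * c by rewrite zB enormZ.
have near : enorm (z s - z s0) < del by rewrite zsz -ltr_pdivlMr.
have lin := hdel (z s) (zball s hs) near.
have dlin := le_trans (opnorm_le (df (z s0)) (z s - z s0))
  (ler_wpM2r (enorm_ge0 _) (dfL _ (zball s0 hs0))).
have := enormD (f (z s) - f (z s0) - (z s - z s0) *m df (z s0)) ((z s - z s0) *m df (z s0)).
rewrite subrK => expand; rewrite zsz in lin dlin.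
have -> : (L * c + e) * `|s - s0| = e / c * (`|s - s0| * c) + L * (`|s - s0| * c).
  by field; rewrite gt_eqF.
by move: lin dlin expand; lra.
Qed.

Lemma lipschitz_value_bound n m L t (f : 'rV[R]_n -> 'rV[R]_m) v : 0 <= t ->
  lipschitz_on_ball L t f -> eball n t v -> enorm (f v) <= enorm (f 0) + L * enorm v.
Proof.
move=> t0 flip vt; have := flip 0 v (eball0 n t0) vt; rewrite subr0 => fv.
by have := enormD (f v - f 0) (f 0); rewrite subrK; lra.
Qed.

End MeanValue.

(* ball.  Iterates form a geometric Cauchy sequence; their limit is built    *)
(* coordinatewise from limits of real sequences.                             *)
Section Contraction.
Variable R : realType.
Implicit Types (th C K : R).

Lemma geometric_lt th K (e : R) : 0 <= th -> th < 1 -> 0 <= K -> 0 < e ->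
  exists N : nat, K * th ^+ N < e.
Proof.
move=> th0 th1 K0 e0.
have /cvgr0_norm_lt /(_ (e / (K + 1))) [] := @cvg_expr _ th (ltac:(by rewrite ger0_norm)).
  by rewrite divr_gt0 //; lra.
move=> N _ /(_ N (leqnn N)) /=; rewrite ger0_norm ?exprn_ge0 // => thN.
exists N; apply: le_lt_trans (ler_wpM2r (exprn_ge0 N th0) (_ : K <= K + 1)) _; first lra.
by rewrite mulrC -ltr_pdivlMr //; lra.
Qed.

Lemma le_geometric_error th K (x b : R) : 0 <= th -> th < 1 -> 0 <= K ->
  (forall m : nat, x <= b + K * th ^+ m) -> x <= b.
Proof.
move=> th0 th1 K0 xb; apply/ler_addgt0Pr => e e0.
have [N KN] := geometric_lt th0 th1 K0 e0.
by apply: le_trans (xb N) _; lra.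
Qed.

Lemma geometric_cauchy_real (u : nat -> R) C th : 0 <= th -> th < 1 -> 0 <= C ->
  (forall m j, `|u m - u (m + j)%N| <= C * th ^+ m) ->
  forall m, `|limn u - u m| <= C * th ^+ m.
Proof.
move=> th0 th1 C0 osc.
have cvg_u : cvgn u.
  apply/cauchy_cvgP; apply: cauchy_exP => e e0.
  have [N CN] := geometric_lt th0 th1 C0 e0.
  exists (u N); exists N => // n /= Nn; rewrite -ball_normE /ball_ /=.
  by apply: le_lt_trans CN; have := osc N (n - N)%N; rewrite subnKC.
move=> m; have near_u (k : nat) : (m <= k)%N -> `|u m - u k| <= C * th ^+ m.
  by move=> mk; have := osc m (k - m)%N; rewrite subnKC.
rewrite ler_norml; apply/andP; split.
- rewrite lerBrDr; apply: limr_ge => //; near=> k.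
  have : `|u m - u k| <= C * th ^+ m by apply: near_u; near: k; exact: nbhs_infty_ge.
  by rewrite ler_norml => /andP[_]; lra.
- rewrite lerBlDr; apply: limr_le => //; near=> k.
  have : `|u m - u k| <= C * th ^+ m by apply: near_u; near: k; exact: nbhs_infty_ge.
  by rewrite ler_norml => /andP[+ _]; lra.
Unshelve. all: by end_near.
Qed.

Lemma geometric_cauchy n (y : nat -> 'rV[R]_n) C th : 0 <= th -> th < 1 -> 0 <= C ->
  (forall m j, enorm (y m - y (m + j)%N) <= C * th ^+ m) ->
  exists L, forall m, enorm (L - y m) <= Num.sqrt n%:R * C * th ^+ m.
Proof.
move=> th0 th1 C0 osc.
exists (\row_i limn (fun m => y m ord0 i)) => m.
rewrite -mulrA; apply: enorm_le_coord => i; rewrite !mxE.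
apply: geometric_cauchy_real => // {}m j.
by apply: le_trans (osc m j); have := enorm_coord (y m - y (m + j)%N) i; rewrite !mxE.
Qed.

Section Iterates.
Variables (n : nat) (a th : R) (T : 'rV[R]_n -> 'rV[R]_n).
Hypotheses (a_ge0 : 0 <= a) (th_ge0 : 0 <= th) (th_lt1 : th < 1).
Hypothesis T_ball : forall v, eball n a v -> eball n a (T v).
Hypothesis T_lip : lipschitz_on_ball th a T.

Let y m := iter m T 0.

Let y_ball m : eball n a (y m).
Proof. by elim: m => [|m IH]; [exact: eball0 | exact: T_ball]. Qed.

Let C := enorm (y 1 - y 0) / (1 - th).

Let C_ge0 : 0 <= C.
Proof. by rewrite divr_ge0 ?enorm_ge0 // subr_ge0 ltW. Qed.

Let iter_step m : enorm (y m.+1 - y m) <= C * (1 - th) * th ^+ m.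
Proof.
rewrite divfK ?subr_eq0 ?gt_eqF // mulrC.
elim: m => [|m IH]; first by rewrite expr0 mul1r.
apply: le_trans (T_lip (y_ball m) (y_ball m.+1)) _.
by rewrite exprS -mulrA ler_wpM2l.
Qed.

Let iter_dist m j : enorm (y m - y (m + j)%N) <= C * th ^+ m - C * th ^+ (m + j).
Proof.
elim: j => [|j IH]; first by rewrite addn0 !subrr enorm0.
apply: le_trans (enorm_triangle _ (y (m + j)%N) _) _.
rewrite addnS [enorm (y (m + j)%N - _)]enormB.
have := iter_step (m + j); move: IH; rewrite exprS.
have -> : C * (th * th ^+ (m + j)) = C * th ^+ (m + j) - C * (1 - th) * th ^+ (m + j).
  by ring.
lra.
Qed.

Lemma contraction_fixpoint : exists2 v, eball n a v & T v = v.
Proof.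
have osc m j : enorm (y m - y (m + j)%N) <= C * th ^+ m.
  apply: le_trans (iter_dist m j) _.
  by rewrite lerBlDr lerDl mulr_ge0 ?exprn_ge0.
have [L yL] := geometric_cauchy th_ge0 th_lt1 C_ge0 osc.
set K := Num.sqrt n%:R * C in yL.
have K_ge0 : 0 <= K by rewrite mulr_ge0 ?sqrtr_ge0.
have L_ball : eball n a L.
  apply: (le_geometric_error th_ge0 th_lt1 K_ge0) => m.
  have := enormD (L - y m) (y m); rewrite subrK => /le_trans; apply.
  by rewrite addrC; exact: lerD (y_ball m) (yL m).
exists L => //; apply/eqP; rewrite -subr_eq0; apply/eqP/enorm_eq0.
apply/le_anti; rewrite enorm_ge0 andbT.
apply: (le_geometric_error (K := 2 * K) th_ge0 th_lt1) => [|m].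
  by rewrite mulr_ge0.
(* |T L - L| <= |T L - T (y m)| + |y m.+1 - L| <= th K th^m + K th^m.+1 *)
apply: le_trans (enorm_triangle _ (y m.+1) _) _.
have TL : enorm (T L - y m.+1) <= th * (K * th ^+ m).
  exact: le_trans (T_lip (y_ball m) L_ball) (ler_wpM2l th_ge0 (yL m)).
have yL1 := yL m.+1; rewrite exprS mulrCA in yL1.
have thK : th * (K * th ^+ m) <= K * th ^+ m.
  by apply: ler_piMl; [exact: mulr_ge0 K_ge0 (exprn_ge0 _ th_ge0) | exact: ltW].
by rewrite add0r -mulrA [enorm (y m.+1 - L)]enormB; lra.
Qed.

End Iterates.
End Contraction.

Section GraphIntersection.
Variables (R : realType) (d k : nat).
Variables (D1 : 'M[R]_d) (D2 : 'M[R]_k) (H : 'rV[R]_(d + k) -> 'rV[R]_(d + k)).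
Variables (G : 'rV[R]_d -> 'rV[R]_k) (J : 'rV[R]_k -> 'rV[R]_d).
Variables (eps eta p q : R).
Hypotheses (eta_gt0 : 0 < eta) (eta_le_p : eta <= p) (eta_le_q : 9 / 10 * eta <= q).
Hypotheses (eps_ge0 : 0 <= eps) (eps_small : eps <= 1 / 10).
Hypothesis D1_unit : D1 \in unitmx.
Hypothesis D1_expand : forall x, enorm (x *m invmx D1) <= enorm x.
Hypothesis D2_contract : forall x, enorm (x *m D2) <= enorm x.
Hypotheses (H0 : enorm (H 0) <= eps * eta) (H_lip : lipschitz_on_ball eps (2 * p) H).
Hypotheses (G0 : enorm (G 0) <= eta / 1000) (G_lip : lipschitz_on_ball (2^-1) p G).
Hypotheses (J0 : enorm (J 0) <= eta / 900) (J_lip : lipschitz_on_ball (2^-1) q J).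

Definition graph (v : 'rV[R]_d) : 'rV[R]_(d + k) := row_mx v (G v).
Definition psi (v : 'rV[R]_d) : 'rV[R]_k := G v *m D2 + rsubmx (H (graph v)).
Definition T (v : 'rV[R]_d) : 'rV[R]_d :=
  (J (psi v) - lsubmx (H (graph v))) *m invmx D1.

Lemma F_graph v :
  diagF D1 D2 H (graph v) = row_mx (v *m D1 + lsubmx (H (graph v))) (psi v).
Proof.
rewrite /diagF /graph mul_row_block !mulmx0 addr0 add0r.
by rewrite -[X in _ + X]hsubmxK add_row_mx.
Qed.

Lemma T_fixed v : T v = v <-> v *m D1 + lsubmx (H (graph v)) = J (psi v).
Proof.
split => [Tv | fix_eq]; last by rewrite /T -fix_eq addrK mulmxK.
by rewrite -{1}Tv /T mulmxKV // subrK.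
Qed.


Let p_ge0 : 0 <= p. Proof. by apply: le_trans eta_le_p; apply: ltW. Qed.

Lemma graph_bound v : eball d p v -> enorm (graph v) <= eta / 1000 + 3 / 2 * enorm v.
Proof.
move=> vp; apply: le_trans (enorm_row_mx _ _) _.
have := le_trans (lipschitz_value_bound p_ge0 G_lip vp) (lerD G0 (lexx _)).
by have := enorm_ge0 v; lra.
Qed.

Lemma graph_ball v : eball d p v -> eball (d + k) (2 * p) (graph v).
Proof.
move=> vp; have := graph_bound vp; rewrite /eball /= in vp *.
by have := ltW eta_gt0; have := eta_le_p; lra.
Qed.

Lemma graph_lip : lipschitz_on_ball (3 / 2) p graph.
Proof.
move=> v v' vp v'p; rewrite /graph opp_row_mx add_row_mx.
apply: le_trans (enorm_row_mx _ _) _.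
by have := G_lip vp v'p; lra.
Qed.

Lemma H_graph_lip : lipschitz_on_ball (3 / 2 * eps) p (H \o graph).
Proof.
move=> v v' vp v'p /=; apply: le_trans (H_lip (graph_ball vp) (graph_ball v'p)) _.
have -> : 3 / 2 * eps * enorm (v' - v) = eps * (3 / 2 * enorm (v' - v)) by ring.
by rewrite ler_wpM2l // graph_lip.
Qed.

Lemma psi_lip : lipschitz_on_ball (2^-1 + 3 / 2 * eps) p psi.
Proof.
move=> v v' vp v'p.
have -> : psi v' - psi v = (G v' - G v) *m D2 + rsubmx (H (graph v') - H (graph v)).
  by rewrite /psi mulmxBl linearB /= opprD addrACA.
apply: le_trans (enormD _ _) _; rewrite mulrDl.
apply: lerD; first exact: le_trans (D2_contract _) (G_lip vp v'p).
by apply: le_trans (enorm_rsubmx _) _; exact: H_graph_lip.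
Qed.

Lemma T_contract v v' : eball d p v -> eball d p v' ->
  eball k q (psi v) -> eball k q (psi v') -> enorm (T v' - T v) <= 2^-1 * enorm (v' - v).
Proof.
move=> vp v'p psiq psi'q; rewrite /T -mulmxBl; apply: le_trans (D1_expand _) _.
have -> : J (psi v') - lsubmx (H (graph v')) - (J (psi v) - lsubmx (H (graph v)))
    = (J (psi v') - J (psi v)) - lsubmx (H (graph v') - H (graph v)).
  by rewrite linearB /= opprK linearB /= opprD opprK addrACA.
apply: le_trans (enormD _ _) _; rewrite enormN.
have hJ : enorm (J (psi v') - J (psi v)) <= 2^-1 * ((2^-1 + 3 / 2 * eps) * enorm (v' - v)).
  apply: le_trans (J_lip psiq psi'q) _.
  by rewrite ler_wpM2l ?invr_ge0 ?ler0n //; exact: psi_lip.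
have hH := le_trans (enorm_lsubmx _) (H_graph_lip vp v'p).
have eps_v : eps * enorm (v' - v) <= 1 / 10 * enorm (v' - v).
  by rewrite ler_wpM2r ?enorm_ge0.
by move: hJ hH eps_v (enorm_ge0 (v' - v)); lra.
Qed.

Lemma H_graph_small v : eball d eta v -> enorm (H (graph v)) <= 26 / 100 * eta.
Proof.
move=> veta; have vp := eball_le eta_le_p veta.
have p2_ge0 : 0 <= 2 * p by rewrite mulr_ge0.
have := le_trans (lipschitz_value_bound p2_ge0 H_lip (graph_ball vp)) (lerD H0 (lexx _)).
have : eps * (enorm (graph v) + eta) <= 1 / 10 * (2501 / 1000 * eta).
  apply: ler_pM => //; first by rewrite addr_ge0 ?enorm_ge0 // ltW.
  by move: (graph_bound vp) veta eta_gt0; rewrite /eball /=; lra.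
by move: eta_gt0; lra.
Qed.

Lemma psi_small v : eball d eta v -> enorm (psi v) <= 77 / 100 * eta.
Proof.
move=> veta; have vp := eball_le eta_le_p veta.
apply: le_trans (enormD _ _) _.
have := le_trans (D2_contract _) (lipschitz_value_bound p_ge0 G_lip vp).
have := le_trans (enorm_rsubmx _) (H_graph_small veta).
by move: G0 veta eta_gt0; rewrite /eball /=; lra.
Qed.

Lemma psi_ball v : eball d eta v -> eball k q (psi v).
Proof. by move=> /psi_small; rewrite /eball /=; move: eta_le_q eta_gt0; lra. Qed.

Lemma T_ball v : eball d eta v -> eball d eta (T v).
Proof.
move=> veta; rewrite /eball /= /T; apply: le_trans (D1_expand _) _.
apply: le_trans (enormD _ _) _; rewrite enormN.
have q_ge0 : 0 <= q by move: eta_le_q eta_gt0; lra.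
have := lipschitz_value_bound q_ge0 J_lip (psi_ball veta).
have := le_trans (enorm_lsubmx _) (H_graph_small veta).
by move: J0 (psi_small veta) eta_gt0; lra.
Qed.

Theorem graph_image_meets_graph_once :
  exists! y : 'rV[R]_(d + k),
    (exists2 v, eball d p v & y = diagF D1 D2 H (row_mx v (G v))) /\
    (exists2 w, eball k q w & y = row_mx (J w) w).
Proof.
have T_lip : lipschitz_on_ball (2^-1) eta T.
  move=> v v' veta v'eta; apply: T_contract (psi_ball veta) (psi_ball v'eta).
    exact: eball_le eta_le_p _ veta.
  exact: eball_le eta_le_p _ v'eta.
have half_ge0 : 0 <= 2^-1 :> R by rewrite invr_ge0 ler0n.
have half_lt1 : 2^-1 < 1 :> R by rewrite invf_lt1 ?ltr0n // ltr1n.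
have [v0 v0eta Tv0] := contraction_fixpoint (ltW eta_gt0) half_ge0 half_lt1 T_ball T_lip.
exists (diagF D1 D2 H (graph v0)); split.
  split; first by exists v0 => //; exact: eball_le eta_le_p _ v0eta.
  by exists (psi v0); [exact: psi_ball | rewrite F_graph (proj1 (T_fixed v0) Tv0)].
(* uniqueness: any intersection point comes from a fixed point of T *)
move=> _ [[v vp ->] [w wq]]; rewrite -/(graph v) F_graph => /eq_row_mx[fix_eq psi_w].
have Tv : T v = v by apply/T_fixed; rewrite fix_eq psi_w.
have v0p := eball_le eta_le_p v0eta.
have := T_contract v0p vp (psi_ball v0eta) (ltac:(by rewrite psi_w)).
rewrite Tv Tv0 => contr.
have /enorm_eq0/eqP : enorm (v - v0) = 0 by move: contr (enorm_ge0 (v - v0)); lra.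
by rewrite subr_eq0 => /eqP ->; rewrite F_graph.
Qed.

End GraphIntersection.

Section Hypotheses.
Variable R : realType.

Lemma C0normM_ub a b (S : set 'rV[R]_a) (h : 'rV[R]_a -> 'M[R]_(a, b)) z :
  S z -> ((opnorm (h z))%:E <= C0normM S h)%E.
Proof. by move=> Sz; apply: ereal_sup_ubound; exists z. Qed.

Lemma C0_lipschitz a b t (L : R) (f : 'rV[R]_a -> 'rV[R]_b) df :
  has_deriv_within (eball a t) f df -> (C0normM (eball a t) df <= L%:E)%E ->
  lipschitz_on_ball L t f.
Proof.
move=> fdf dfL; apply: (mean_value_ineq fdf) => z zt.
by rewrite -lee_fin; apply: le_trans dfL; exact: C0normM_ub.
Qed.

(* If ||dG||_{C^0} + Hol_delta(dG) <= c, then G is c-Lipschitz: as soon as *)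
(* the ball has two points the Hoelder constant is nonnegative.           *)
Lemma C1delta_lipschitz a b (delta p c : R) (G : 'rV[R]_a -> 'rV[R]_b) dG :
  has_deriv_within (eball a p) G dG ->
  (C0normM (eball a p) dG + HolM delta (eball a p) dG <= c%:E)%E ->
  lipschitz_on_ball c p G.
Proof.
move=> Gd GC1 x y xp yp.
have [->|yx] := eqVneq y x; first by rewrite !subrr !enorm0 mulr0.
have Hol_ge0 : (0 <= HolM delta (eball a p) dG)%E.
  apply: le_trans (ereal_sup_ubound _); last by exists y, x.
  by rewrite lee_fin divr_ge0 ?opnorm_ge0 ?powR_ge0.
apply: (C0_lipschitz Gd) => //; apply: le_trans GC1; exact: leeDl.
Qed.

(* The representing functions of M^u and M^s (the latter has the same     *)
(* definition with the roles of the factors exchanged).                     *)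
Lemma rep_bounds a b (delta p eta : R) (G : 'rV[R]_a -> 'rV[R]_b) :
  unstable_rep delta p eta G -> enorm (G 0) <= eta / 1000 /\ lipschitz_on_ball 2^-1 p G.
Proof.
case=> dG [Gd [G0 [_ GC1]]]; split; last exact: C1delta_lipschitz Gd GC1.
by move: G0; rewrite mulrC !exprS expr0 mulr1 -!natrM.
Qed.

Lemma exp_window (eps eta x : R) : 0 < eta -> 0 <= eps -> eps <= 1 / 10 ->
  expR (- eps) <= x / eta -> x / eta <= expR eps -> 9 / 10 * eta <= x <= 10 / 9 * eta.
Proof.
move=> eta_gt0 eps_ge0 eps_small lo hi.
have expN : 1 - eps <= expR (- eps) by have := expR_ge1Dx (- eps); lra.
have expP : expR eps * (1 - eps) <= 1.
  by rewrite -[X in _ <= X](expRxMexpNx_1 eps) ler_wpM2l // ltW // expR_gt0.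
have expP' : expR eps <= 10 / 9.
  have := ler_wpM2l (ltW (expR_gt0 eps)) (_ : 9 / 10 <= 1 - eps); lra.
apply/andP; split.
  by rewrite -ler_pdivlMr //; lra.
by rewrite -ler_pdivrMr //; lra.
Qed.

End Hypotheses.

Theorem lemmaA4 (R : realType) (d k : nat) (delta chi : R) :
  0 < delta -> delta < 1 -> 0 < chi ->
  exists2 eps0 : R, 0 < eps0 &
  forall eps : R, 0 < eps -> eps < eps0 ->
  forall r : R, 0 < r -> 2 * r `^ delta < eps ->
  forall eta p : R, 0 < eta -> eta <= p -> p <= r / 2 ->
  forall etat pt : R, 0 < etat -> etat <= pt -> pt <= expR eps * p ->
    expR (- eps) <= etat / eta -> etat / eta <= expR eps ->
  forall qt : R, etat <= qt -> qt <= r / 2 ->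
  forall (D1 : 'M[R]_d) (D2 : 'M[R]_k),
    D1 \in unitmx -> D2 \in unitmx ->
    opnorm (invmx D1) < expR (- chi) -> opnorm D2 < expR (- chi) ->
  forall (H : 'rV[R]_(d + k) -> 'rV[R]_(d + k))
         (dH : 'rV[R]_(d + k) -> 'M[R]_(d + k, d + k)),
    has_deriv_within (eball (d + k) r) H dH ->
    enorm (H 0) < eps * eta ->
    (forall t : R, eta <= t -> t <= 2 * p ->
       (C0normM (eball (d + k) t) dH < (eps * t `^ delta)%:E)%E) ->
    (HolM delta (eball (d + k) r) dH < eps%:E)%E ->
  forall (G : 'rV[R]_d -> 'rV[R]_k) (J : 'rV[R]_k -> 'rV[R]_d),
    unstable_rep delta p eta G ->
    stable_rep delta qt etat J ->
    exists! y : 'rV[R]_(d + k),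
      (exists2 v, eball d p v & y = diagF D1 D2 H (row_mx v (G v))) /\
      (exists2 w, eball k qt w & y = row_mx (J w) w).
Proof.
move=> delta_gt0 _ chi_gt0; exists (1 / 10) => [|eps eps_gt0 eps_lt r r_gt0 r_small eta p eta_gt0
  eta_le_p p_le_r etat pt etat_gt0 _ _ lo hi qt etat_le_qt qt_le_r D1 D2 D1_unit _
  D1_norm D2_norm H dH Hd H0 dH_C0 _ G J Grep Jrep]; first by lra.
have [etat_lo etat_hi] := andP (exp_window eta_gt0 (ltW eps_gt0) (ltW eps_lt) lo hi).
(* D1^-1 and D2 do not increase norms, since e^-chi <= 1 *)
have chi_le1 : expR (- chi) <= 1 by rewrite ltW // expR_lt1 oppr_lt0.
have D1_expand x := opnorm_le1 x (ltW (lt_le_trans D1_norm chi_le1)).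
have D2_contract x := opnorm_le1 x (ltW (lt_le_trans D2_norm chi_le1)).
(* H is eps-Lipschitz on B[2p], since ||dH||_{C^0(B[2p])} < eps (2p)^delta <= eps *)
have pow_le1 : (2 * p) `^ delta <= 1.
  have : (2 * p) `^ delta <= r `^ delta.
    by apply: ge0_ler_powR; rewrite ?nnegrE; first exact: ltW; lra.
  by move: r_small eps_lt; lra.
have H_lip : lipschitz_on_ball eps (2 * p) H.
  apply: C0_lipschitz; first by apply: has_deriv_within_sub Hd; apply: eball_le; lra.
  apply: ltW; apply: lt_le_trans (dH_C0 _ _ (lexx _)) _; first lra.
  by rewrite lee_fin; apply: ler_piMr => //; exact: ltW.
have [G0 G_lip] := rep_bounds Grep.
have [J0 J_lip] := rep_bounds Jrep.
apply: (graph_image_meets_graph_once (eps := eps) (eta := eta)) => //.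
- by apply: le_trans etat_le_qt.
- exact: ltW.
- by rewrite ltW.
- exact: ltW.
- by apply: le_trans J0 _; lra.
Qed.
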